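(* For every $\pi\in\Pi$, $x\in S$, $\alpha\in(0,1]$ and $\gamma\ge 1$, $$\mathrm{CVaR}^\pi_{\alpha,x}\Big(\max_{t=0,1,\dots,T} g_K(X_t)\Big) \le \frac{1}{\gamma}\log\Big(\frac{1}{\alpha}E_x^\pi\Big(\sum_{t=0}^T e^{\gamma g_K(X_t)}\Big)\Big).$$
   Context: Setting: $S$, $A$, $W$ are Borel spaces (states, controls, disturbances), $T\in\mathbb{N}$. The sample space is $\Omega = (S\times A)^T\times S$ with its Borel $\sigma$-algebra $\mathcal{B}(\Omega)$; for $\omega=(x_0,u_0,\dots,x_{T-1},u_{T-1},x_T)$, $X_t(\omega)=x_t$ and $U_t(\omega)=u_t$. A Borel-measurable map $f:S\times A\times W\to S$ and a probability distribution $P_D$ on $W$ define the transition kernel $Q(B\mid x,u) = P_D(\{d\in W: f(x,u,d)\in B\})$ for $B\in\mathcal{B}(S)$. $\Pi$ is the set of randomized history-dependent policies $\pi=(\pi_0,\dots,\pi_{T-1})$, each $\pi_t$ a Borel-measurable stochastic kernel on $A$ given $H^t=(S\times A)^t\times S$. For $x\in S$, $\pi\in\Pi$, $P_x^\pi$ is the unique probability measure on $(\Omega,\mathcal{B}(\Omega))$ (Ionescu-Tulcea) under which $X_0=x$, $U_t$ is distributed according to $\pi_t(\cdot\mid X_0,U_0,\dots,X_t)$, and $X_{t+1}$ is distributed according to $Q(\cdot\mid X_t,U_t)$; $E_x^\pi$ denotes expectation under $P_x^\pi$. A constraint set $K\in\mathcal{B}(S)$ and a bounded Borel-measurable $g_K:S\to\mathbb{R}$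 are given. For a probability space $(\Omega,\mathcal{F},\mu)$, $Y\in L^1$ and $\alpha\in(0,1]$, $\mathrm{CVaR}_\alpha(Y) := \inf_{s\in\mathbb{R}}\big(s + \tfrac{1}{\alpha}E(\max(Y-s,0))\big)$. $\mathrm{CVaR}^\pi_{\alpha,x}$ denotes CVaR computed with respect to $P_x^\pi$. *)

From HB Require Import structures.
From mathcomp Require Import all_boot all_order all_algebra.
From mathcomp Require Import all_classical all_reals all_analysis.
Set Implicit Arguments. Unset Strict Implicit. Unset Printing Implicit Defensive.
Import Order.TTheory GRing.Theory Num.Theory.
Local Open Scope classical_set_scope.
Local Open Scope ring_scope.

Section mdp.
Context {dS dA dW : measure_display} (S : measurableType dS)
  (A : measurableType dA) (W : measurableType dW) (R : realType) (T : nat).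

Definition Omega := (T.-tuple (S * A) * S)%type.
Definition Hist (t : nat) := (t.-tuple (S * A) * S)%type.

(* coordinate processes (X_t for t <= T, U_t for t < T) *)
Definition Xproc (t : nat) (w : Omega) : S :=
  if (t < T)%N then (nth point (val w.1) t).1 else w.2.
Definition Uproc (t : nat) (w : Omega) : A := (nth point (val w.1) t).2.
Definition Hproc (t : nat) (w : Omega) : Hist t :=
  ([tuple nth point (val w.1) i | i < t], Xproc t w).

Definition Qker (f : (S * A * W)%type -> S) (PD : probability W R)
  (x : S) (u : A) (B : set S) : \bar R :=
  PD [set d | B (f (x, u, d))].

Definition policy := forall t : 'I_T, R.-pker (Hist t) ~> A.

(* P is the Ionescu-Tulcea measure P_x^pi: X_0 = x a.s.; conditional law of
   U_t given the history H_t is pi_t(.|H_t); conditional law of X_{t+1} given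
   (H_t,U_t) is Q(.|X_t,U_t).  (Stated on measurable rectangles, which form a
   pi-system generating the relevant product sigma-algebras.) *)
Definition is_ITmeasure (f : (S * A * W)%type -> S) (PD : probability W R)
  (x : S) (pi : policy) (P : probability Omega R) : Prop :=
  [/\ (forall B : set S, measurable B ->
        P (Xproc 0 @^-1` B) = (\1_B x)%:E),
      (forall (t : 'I_T) (B : set (Hist t)) (C : set A),
        measurable B -> measurable C ->
        P (Hproc t @^-1` B `&` Uproc t @^-1` C) =
        (\int[P]_(w in Hproc t @^-1` B) pi t (Hproc t w) C)%E) &
      (forall (t : 'I_T) (B : set (Hist t)) (C : set A) (D : set S),
        measurable B -> measurable C -> measurable D ->
        P (Hproc t @^-1` B `&` Uproc t @^-1` C `&` Xproc t.+1 @^-1` D) =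
        (\int[P]_(w in Hproc t @^-1` B `&` Uproc t @^-1` C)
            Qker f PD (Xproc t w) (Uproc t w) D)%E)].

End mdp.

Definition CVaR {d} {Om : measurableType d} {R : realType}
  (P : probability Om R) (alpha : R) (Y : Om -> R) : \bar R :=
  ereal_inf [set (s%:E + (alpha^-1)%:E *
                  \int[P]_w (Num.max (Y w - s) 0)%:E)%E | s in [set: R]].

From HB Require Import structures.
From mathcomp Require Import all_boot all_order all_algebra.
From mathcomp Require Import all_classical all_reals all_analysis.
From mathcomp Require Import measurable_realfun ring.
Import Order.TTheory GRing.Theory Num.Theory.
Local Open Scope classical_set_scope.
Local Open Scope ring_scope.

(* CVaR is an infimum over thresholds s, so it suffices to
   exhibit one good threshold.  For gamma > 0 the elementary inequality
   max(y, 0) <= exp(gamma y - 1) / gamma (a rescaling of 1 + u <= e^u) gives,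
   for every s and every exponential majorant Z >= exp(gamma Y),
     s + E[max(Y - s, 0)] / alpha <= s + exp(-gamma s - 1) E[Z] / (gamma alpha),
   and the choice s = (ln(E[Z] / alpha) - 1) / gamma turns the right-hand side
   into ln(E[Z] / alpha) / gamma.  The theorem applies it to Y = max_t gK(X_t)
   and Z = sum_t exp(gamma gK(X_t)); the remaining facts are that Z majorises
   exp(gamma Y) (the maximum is one of the summands), that Y and Z are measurable
   (coordinates of Omega are measurable), and that E[Z] is finite and positive
   (gK is bounded, so Z lies between two positive constants).  The description
   of P as the Ionescu-Tulcea measure is not needed: the bound holds for every
   probability measure on the sample space. *)

Lemma ler_sum_term {R : numDomainType} {n : nat} {F : 'I_n -> R} (i : 'I_n) :
  (forall j, 0 <= F j) -> F i <= \sum_(j < n) F j.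
Proof.
move=> F0; rewrite (bigD1 i) //= lerDl.
by apply: sumr_ge0 => j _; exact: F0.
Qed.

(* The positive part of y is dominated by the exponential
   exp(gamma y - 1) / gamma, which is 1 + u <= exp u at u = gamma y - 1. *)
Lemma max0_le_expR {R : realType} (gamma y : R) :
  0 < gamma -> Num.max y 0 <= expR (gamma * y - 1) / gamma.
Proof.
move=> g0; rewrite ge_max; apply/andP; split; last first.
  by rewrite divr_ge0 // ?expR_ge0 // ltW.
rewrite ler_pdivlMr // mulrC.
by have := expR_ge1Dx (gamma * y - 1); rewrite addrC subrK.
Qed.

Lemma expR_bigmax_le_sum {R : realType} (n : nat) (gamma : R)
    (F : 'I_n.+1 -> R) :
  expR (gamma * \big[Num.max/F ord0]_(i < n.+1) F i)
    <= \sum_(i < n.+1) expR (gamma * F i).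
Proof.
have term_le i : expR (gamma * F i) <= \sum_(j < n.+1) expR (gamma * F j).
  by apply: ler_sum_term => j; exact: expR_ge0.
apply: (big_ind (fun v => expR (gamma * v) <= _)) => //.
by move=> u v hu hv; case: (leP u v).
Qed.

Lemma expR_mul_bounds {R : realType} {gamma M y : R} :
  0 < gamma -> `|y| <= M ->
  expR (- (gamma * M)) <= expR (gamma * y) <= expR (gamma * M).
Proof.
move=> g0; rewrite ler_norml => /andP[lo hi].
by rewrite !ler_expR -mulrN !ler_pM2l // lo hi.
Qed.

Lemma measurable_bigmaxr {d} {Om : measurableType d} {R : realType} {I : Type}
    (r : seq I) (F0 : Om -> R) (F : I -> Om -> R) :
  measurable_fun [set: Om] F0 -> (forall i, measurable_fun [set: Om] (F i)) ->
  measurable_fun [set: Om] (fun w => \big[Num.max/F0 w]_(i <- r) F i w).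
Proof.
move=> mF0 mF; elim: r => [|i r IH].
  by under eq_fun do rewrite big_nil.
under eq_fun do rewrite big_cons.
exact: measurable_maxr.
Qed.

Lemma expectation_fin_gt0 {d} {Om : measurableType d} {R : realType}
    (P : probability Om R) {Z : Om -> R} {c C : R} :
  measurable_fun [set: Om] Z -> 0 < c -> (forall w, c <= Z w <= C) ->
  (\int[P]_w (Z w)%:E)%E \is a fin_num /\ 0 < fine (\int[P]_w (Z w)%:E)%E.
Proof.
move=> mZ c0 cZC.
have mZE : measurable_fun [set: Om] (fun w => (Z w)%:E) by exact: measurableT_comp.
have intP (r : R) : (\int[P]_w (cst r%:E) w = r%:E)%E.
  by rewrite integral_cst // -[X in (_ * X)%E]/(P [set: Om]) probability_setT mule1.
have Z0 w : 0 <= Z w by case/andP: (cZC w) => /(le_trans (ltW c0)).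
have lo : (c%:E <= \int[P]_w (Z w)%:E)%E.
  rewrite -[leLHS]intP; apply: ge0_le_integral => //.
  - by move=> w _; rewrite lee_fin ltW.
  - by move=> w _; rewrite lee_fin; case/andP: (cZC w).
have hi : (\int[P]_w (Z w)%:E <= C%:E)%E.
  rewrite -[leRHS]intP; apply: ge0_le_integral => //.
  - by move=> w _; rewrite lee_fin.
  - by move=> w _; rewrite lee_fin; case/andP: (cZC w).
have fin : (\int[P]_w (Z w)%:E)%E \is a fin_num.
  by rewrite fin_numElt (lt_le_trans (ltNyr _) lo) (le_lt_trans hi (ltry _)).
split => //; rewrite -lte_fin fineK //.
exact: lt_le_trans lo.
Qed.

Lemma CVaR_le_log_majorant {d} {Om : measurableType d} {R : realType}
    (P : probability Om R) {alpha gamma : R} {Y Z : Om -> R} :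
  0 < alpha -> 0 < gamma ->
  measurable_fun [set: Om] Y -> measurable_fun [set: Om] Z ->
  (forall w, expR (gamma * Y w) <= Z w) ->
  (\int[P]_w (Z w)%:E)%E \is a fin_num -> 0 < fine (\int[P]_w (Z w)%:E)%E ->
  (CVaR P alpha Y
   <= (gamma^-1 * ln (alpha^-1 * fine (\int[P]_w (Z w)%:E)%E))%:E)%E.
Proof.
move=> a0 g0 mY mZ YZ Zfin.
set m := fine _ => m0.
pose s := (ln (alpha^-1 * m) - 1) / gamma.
pose k := expR (- (gamma * s) - 1) / gamma.
have Z0 w : 0 <= Z w := le_trans (expR_ge0 _) (YZ w).
have mZE : measurable_fun [set: Om] (fun w => (Z w)%:E) by exact: measurableT_comp.
have k0 : 0 <= k by rewrite divr_ge0 // ?expR_ge0 // ltW.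
have k_val : alpha^-1 * (k * m) = gamma^-1.
  rewrite /k (_ : - (gamma * s) - 1 = - ln (alpha^-1 * m)); last first.
    by rewrite /s mulrC divfK ?gt_eqF //; ring.
  by rewrite expRN lnK ?posrE ?mulr_gt0 ?invr_gt0 //; field; rewrite ?gt_eqF.
have pointwise w : Num.max (Y w - s) 0 <= k * Z w.
  apply: le_trans (max0_le_expR gamma (Y w - s) g0) _.
  rewrite mulrBr -addrA expRD [_ * expR _]mulrC mulrAC -/k.
  exact: (ler_wpM2l k0 (YZ w)).
have shortfall : (\int[P]_w (Num.max (Y w - s) 0)%:E <= (k * m)%:E)%E.
  apply: (@le_trans _ _ (\int[P]_w (k%:E * (Z w)%:E))%E).
    apply: ge0_le_integral => //.
    - by move=> w _; rewrite lee_fin le_max lexx orbT.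
    - apply: measurableT_comp => //; apply: measurable_maxr => //.
      exact: measurable_funB.
    - exact: measurable_funeM.
    - by move=> w _; rewrite -EFinM lee_fin.
  rewrite ge0_integralZl_EFin //; last by move=> w _; rewrite lee_fin Z0.
  by rewrite -[X in (_ * X)%E](fineK Zfin) -EFinM.
apply: (@le_trans _ _ (s%:E + (alpha^-1)%:E * (k * m)%:E)%E).
  apply: (le_trans (ereal_inf_lbound _)); first by exists s.
  by apply: leeD2l; apply: lee_wpmul2l => //; rewrite lee_fin invr_ge0 ltW.
rewrite -EFinM -EFinD lee_fin k_val /s.
by rewrite le_eqVlt; apply/orP; left; apply/eqP; field; rewrite gt_eqF.
Qed.

Lemma measurable_Xproc {dS dA : measure_display} (S : measurableType dS)
  (A : measurableType dA) (T t : nat) :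
  measurable_fun [set: Omega S A T] (Xproc t).
Proof.
rewrite /Xproc; case: ltnP => h; last exact: measurable_snd.
have -> : (fun w : Omega S A T => (nth point (val w.1) t).1) =
  (fun w => (tnth w.1 (Ordinal h)).1).
  by apply/funext => w; rewrite (tnth_nth point).
apply: measurableT_comp; first exact: measurable_fst.
exact: (measurableT_comp (measurable_tnth (Ordinal h)) measurable_fst).
Qed.

Theorem theorem1 {dS dA dW : measure_display} (S : measurableType dS)
  (A : measurableType dA) (W : measurableType dW) (R : realType) (T : nat)
  (f : (S * A * W)%type -> S) (mf : measurable_fun [set: S * A * W] f)
  (PD : probability W R)
  (K : set S) (mK : measurable K)
  (gK : S -> R) (mg : measurable_fun [set: S] gK)
  (bg : exists M : R, forall y, `|gK y| <= M)
  (pi : policy S A R T) (x : S) (P : probability (Omega S A T) R)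
  (HP : is_ITmeasure f PD x pi P)
  (alpha gamma : R) (ha : 0 < alpha <= 1) (hg : 1 <= gamma) :
  (CVaR P alpha
     (fun w => \big[Num.max/gK (Xproc 0 w)]_(t < T.+1) gK (Xproc t w))
   <= (gamma^-1 * ln (alpha^-1 *
         fine (\int[P]_w (\sum_(t < T.+1) expR (gamma * gK (Xproc t w)))%:E)))%:E)%E.
Proof.
case: bg => M hM; case/andP: ha => a0 _.
have g0 : 0 < gamma by apply: lt_le_trans hg.
have mG t : measurable_fun [set: Omega S A T] (fun w => gK (Xproc t w)).
  by apply: measurableT_comp => //; exact: measurable_Xproc.
have mZ : measurable_fun [set: Omega S A T]
    (fun w => \sum_(t < T.+1) expR (gamma * gK (Xproc t w))).
  by apply: measurable_sum => t; apply: measurableT_comp => //; exact: measurable_funM.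
have Zbounds (w : Omega S A T) : expR (- (gamma * M)) <=
    \sum_(t < T.+1) expR (gamma * gK (Xproc t w)) <= expR (gamma * M) *+ T.+1.
  apply/andP; split.
    apply: le_trans (ler_sum_term ord0 (fun _ => expR_ge0 _)).
    by case/andP: (expR_mul_bounds g0 (hM (Xproc 0 w))).
  rewrite -[X in _ *+ X](card_ord T.+1) -sumr_const; apply: ler_sum => t _.
  by case/andP: (expR_mul_bounds g0 (hM (Xproc t w))).
have [Zfin Zpos] := expectation_fin_gt0 P mZ (expR_gt0 _) Zbounds.
apply: (CVaR_le_log_majorant P a0 g0 _ mZ _ Zfin Zpos).
  exact: measurable_bigmaxr.
by move=> w; exact: (expR_bigmax_le_sum T gamma (fun t : 'I_T.+1 => gK (Xproc t w))).
Qed.
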